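(* Let $\mathcal{F}_2(\rho,\sigma)=\operatorname{tr}(\rho\sigma)/\max[\operatorname{tr}(\rho^2),\operatorname{tr}(\sigma^2)]$ for density matrices $\rho,\sigma$ on the same finite-dimensional Hilbert space. Then: (i) for all density matrices $\rho_1,\sigma_1$ on $\mathcal{H}_1$ and $\rho_2,\sigma_2$ on $\mathcal{H}_2$, $\mathcal{F}_2(\rho_1\otimes\rho_2,\sigma_1\otimes\sigma_2)\ge\mathcal{F}_2(\rho_1,\sigma_1)\,\mathcal{F}_2(\rho_2,\sigma_2)$; (ii) for all density matrices $\rho,\sigma$ on $\mathcal{H}_1$ and $\tau$ on $\mathcal{H}_2$, $\mathcal{F}_2(\rho\otimes\tau,\sigma\otimes\tau)=\mathcal{F}_2(\rho,\sigma)$; (iii) for all density matrices $\rho,\sigma$ and all integers $n\ge 1$, $\mathcal{F}_2(\rho^{\otimes n},\sigma^{\otimes n})=[\mathcal{F}_2(\rho,\sigma)]^n$.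
   Context: A density matrix is a positive semidefinite operator of unit trace on a finite-dimensional complex Hilbert space. *)

From HB Require Import structures.
From mathcomp Require Import all_boot all_order all_algebra.
From mathcomp Require Export mxtens.
Set Implicit Arguments. Unset Strict Implicit. Unset Printing Implicit Defensive.
Import Order.TTheory GRing.Theory Num.Theory.
Local Open Scope ring_scope.

(* Complex scalars: an arbitrary numeric algebraically closed field C
   (e.g. the complex numbers); operators on an n-dimensional Hilbert
   space are n x n matrices 'M[C]_n. *)

Definition adjmx (C : numClosedFieldType) m n (A : 'M[C]_(m, n)) : 'M[C]_(n, m) :=
  map_mx Num.conj (A^T).

Definition psd (C : numClosedFieldType) n (A : 'M[C]_n) : Prop :=
  adjmx A = A /\ forall v : 'cV[C]_n, 0 <= (adjmx v *m A *m v) 0 0.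

Definition density (C : numClosedFieldType) n (A : 'M[C]_n) : Prop :=
  psd A /\ \tr A = 1.

Definition F2 (C : numClosedFieldType) n (rho sigma : 'M[C]_n) : C :=
  \tr (rho *m sigma) / Num.max (\tr (rho *m rho)) (\tr (sigma *m sigma)).

Fixpoint tdim (n k : nat) : nat :=
  match k with 0 => 1%N | k'.+1 => (n * tdim n k')%N end.

Fixpoint tenspow (C : numClosedFieldType) n (A : 'M[C]_n) (k : nat)
  : 'M[C]_(tdim n k) :=
  match k return 'M[C]_(tdim n k) with
  | 0 => 1%:M
  | k'.+1 => A *t tenspow A k'
  end.

From HB Require Import structures.
From mathcomp Require Import all_boot all_order all_algebra.
From mathcomp Require Import mxtens.
Import Order.TTheory GRing.Theory Num.Theory.
Local Open Scope ring_scope.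
Set Implicit Arguments.
Unset Strict Implicit.
Unset Printing Implicit Defensive.

(* Every trace in F2 is multiplicative under tensor products,
   tr ((A1 ⊗ A2) (B1 ⊗ B2)) = tr (A1 B1) tr (A2 B2), so the three claims reduce
   to facts about maxima of nonnegative reals: max (a c) (b c) = max a b * c,
   max (a^k) (b^k) = (max a b)^k and max (a1 a2) (b1 b2) <= max a1 b1 * max a2 b2.
   The signs this needs, tr (rho sigma) >= 0 and tr (rho^2) > 0 for rho <> 0,
   come from the spectral theorem: if rho = P† D P with P unitary, then
   tr (rho sigma) = sum_i D_ii (P sigma P†)_ii, a sum of products of values of
   positive semidefinite quadratic forms. *)

Section RealMax.
Variable R : numDomainType.
Implicit Types x y : R.

Lemma real_le_maxl {x y} : x \is Num.real -> y \is Num.real -> x <= Num.max x y.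
Proof. by move=> xr yr; case: (real_leP xr yr) => // /ltW. Qed.

Lemma real_le_maxr {x y} : x \is Num.real -> y \is Num.real -> y <= Num.max x y.
Proof. by move=> xr yr; case: (real_leP xr yr) => // /ltW. Qed.

Lemma max_gt0 x y : 0 < x -> 0 < y -> 0 < Num.max x y.
Proof. by move=> x0 y0; rewrite /Order.max; case: ifP. Qed.

Lemma maxr_le_pM (a1 b1 a2 b2 : R) :
  0 <= a1 -> 0 <= b1 -> 0 <= a2 -> 0 <= b2 ->
  Num.max (a1 * a2) (b1 * b2) <= Num.max a1 b1 * Num.max a2 b2.
Proof.
move=> a10 b10 a20 b20.
have [ra1 rb1] := (ger0_real a10, ger0_real b10).
have [ra2 rb2] := (ger0_real a20, ger0_real b20).
have [le1 ge1] := (real_le_maxl ra1 rb1, real_le_maxr ra1 rb1).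
have [le2 ge2] := (real_le_maxl ra2 rb2, real_le_maxr ra2 rb2).
by rewrite /Order.max; case: ifP => _; apply: ler_pM.
Qed.

Lemma maxrXn x y k :
  0 <= x -> 0 <= y -> Num.max (x ^+ k) (y ^+ k) = Num.max x y ^+ k.
Proof.
move=> x0 y0; case: (real_leP (ger0_real x0) (ger0_real y0)) => [xy | /ltW yx].
  by rewrite max_r // lerXn2r.
by rewrite max_l // lerXn2r.
Qed.

End RealMax.

Lemma mxtrace_tens (R : pzRingType) m n (A : 'M[R]_m) (B : 'M[R]_n) :
  \tr (A *t B) = \tr A * \tr B.
Proof. by rewrite /mxtrace mulr_sum; apply: eq_bigr => k _; rewrite mxE. Qed.

Lemma mxtrace_mul_tens (R : comPzRingType) m n
    (A1 B1 : 'M[R]_m) (A2 B2 : 'M[R]_n) :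
  \tr ((A1 *t A2) *m (B1 *t B2)) = \tr (A1 *m B1) * \tr (A2 *m B2).
Proof. by rewrite tensmx_mul mxtrace_tens. Qed.

Section PositiveSemidefinite.
Variable C : numClosedFieldType.

Lemma adjmxK m n (A : 'M[C]_(m, n)) : adjmx (adjmx A) = A.
Proof. exact: trmxCK. Qed.

Lemma adjmx_row m n i (A : 'M[C]_(m, n)) : adjmx (row i A) = col i (adjmx A).
Proof. by rewrite /adjmx tr_row map_col. Qed.

Lemma psd_hermsymmx n (A : 'M[C]_n) : psd A -> A \is hermsymmx.
Proof. by case=> hA _; apply/is_hermitianmxP; rewrite expr0 scale1r. Qed.

Lemma psd_conj_diag_ge0 m n (A : 'M[C]_n) (P : 'M[C]_(m, n)) i :
  psd A -> 0 <= (P *m A *m adjmx P) i i.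
Proof.
case=> _ /(_ (adjmx (row i P))); rewrite adjmxK adjmx_row.
congr (_ <= _); rewrite !mxE; apply: eq_bigr => k _.
by rewrite -row_mul !mxE.
Qed.

Lemma psd_mxtrace_mul_ge0 n (A B : 'M[C]_n) :
  psd A -> psd B -> 0 <= \tr (A *m B).
Proof.
move=> psdA psdB.
have /hermitian_normalmx/orthomx_spectralP := psd_hermsymmx psdA.
set P := spectralmx A; set d := spectral_diag A => defA.
have Punitary : P \is unitarymx := spectral_unitarymx A.
have PPadj : P *m adjmx P = 1%:M by apply/unitarymxP.
have PadjP : adjmx P *m P = 1%:M by rewrite -[adjmx P]mul1mx mulmxKtV.
have diagA : diag_mx d = P *m A *m adjmx P.
  by rewrite defA invmx_unitary // !mulmxA PPadj mul1mx -mulmxA PPadj mulmx1.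
have -> : \tr (A *m B) = \tr (diag_mx d *m (P *m B *m adjmx P)).
  by rewrite diagA !mulmxA mulmxKtV // [RHS]mxtrace_mulC !mulmxA PadjP mul1mx.
rewrite mul_diag_mx /mxtrace; apply: sumr_ge0 => i _; rewrite mxE.
apply: mulr_ge0; last exact: psd_conj_diag_ge0.
by have := psd_conj_diag_ge0 P i psdA; rewrite -diagA mxE eqxx mulr1n.
Qed.

Lemma mxtrace_mul_adjmx m n (A : 'M[C]_(m, n)) :
  \tr (A *m adjmx A) = \sum_(ij : 'I_m * 'I_n) A ij.1 ij.2 * (A ij.1 ij.2)^*.
Proof.
rewrite -(pair_bigA _ (fun i j => A i j * (A i j)^*)); apply: eq_bigr => i _.
by rewrite mxE; apply: eq_bigr => j _; rewrite !mxE.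
Qed.

Lemma mxtrace_mul_adjmx_gt0 m n (A : 'M[C]_(m, n)) :
  A != 0 -> 0 < \tr (A *m adjmx A).
Proof.
move=> nzA; rewrite mxtrace_mul_adjmx lt_def sumr_ge0 ?andbT => [|ij _]; last first.
  exact: mul_conjC_ge0.
rewrite psumr_eq0 => [|ij _]; last exact: mul_conjC_ge0.
apply: contra nzA => /allP A0; apply/eqP/matrixP => i j.
by have := A0 (i, j); rewrite mem_index_enum mul_conjC_eq0 mxE => /(_ isT)/eqP.
Qed.

Lemma psd_mxtrace_sqr_gt0 n (A : 'M[C]_n) : psd A -> A != 0 -> 0 < \tr (A *m A).
Proof.
by case=> hA _; rewrite -[X in _ *m X]hA; apply: mxtrace_mul_adjmx_gt0.
Qed.

Lemma density_neq0 n (A : 'M[C]_n) : density A -> A != 0.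
Proof.
by case=> _ trA; apply: contra_eq_neq trA => ->; rewrite mxtrace0 eq_sym oner_neq0.
Qed.

End PositiveSemidefinite.

Section F2Tensor.
Variable C : numClosedFieldType.

Lemma mxtrace_mul_tenspow n (A B : 'M[C]_n) k :
  \tr (tenspow A k *m tenspow B k) = \tr (A *m B) ^+ k.
Proof.
elim: k => [|k IHk] /=; first by rewrite mulmx1 mxtrace1 expr0.
by rewrite mxtrace_mul_tens IHk exprS.
Qed.

Lemma F2_tens_ge n1 n2 (rho1 sigma1 : 'M[C]_n1) (rho2 sigma2 : 'M[C]_n2) :
  psd rho1 -> psd sigma1 -> psd rho2 -> psd sigma2 ->
  rho1 != 0 -> sigma1 != 0 -> rho2 != 0 -> sigma2 != 0 ->
  F2 rho1 sigma1 * F2 rho2 sigma2 <= F2 (rho1 *t rho2) (sigma1 *t sigma2).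
Proof.
move=> pr1 ps1 pr2 ps2 nr1 ns1 nr2 ns2.
rewrite /F2 !mxtrace_mul_tens mulf_div.
have [a1 b1] := (psd_mxtrace_sqr_gt0 pr1 nr1, psd_mxtrace_sqr_gt0 ps1 ns1).
have [a2 b2] := (psd_mxtrace_sqr_gt0 pr2 nr2, psd_mxtrace_sqr_gt0 ps2 ns2).
have [ab1 ab2] := (mulr_gt0 a1 a2, mulr_gt0 b1 b2).
apply: ler_wpM2l; first by rewrite mulr_ge0 ?psd_mxtrace_mul_ge0.
rewrite lef_pV2 ?posrE ?mulr_gt0 ?max_gt0 //.
by apply: maxr_le_pM; apply: ltW.
Qed.

Lemma F2_tensr n1 n2 (rho sigma : 'M[C]_n1) (tau : 'M[C]_n2) :
  psd tau -> tau != 0 -> F2 (rho *t tau) (sigma *t tau) = F2 rho sigma.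
Proof.
move=> psdt nzt; have t0 := psd_mxtrace_sqr_gt0 psdt nzt.
rewrite /F2 !mxtrace_mul_tens -maxr_pMl ?ltW // invfM mulrACA divff ?mulr1 //.
by rewrite gt_eqF.
Qed.

Lemma F2_tenspow n (rho sigma : 'M[C]_n) k :
  psd rho -> psd sigma -> F2 (tenspow rho k) (tenspow sigma k) = F2 rho sigma ^+ k.
Proof.
move=> psdr psds.
by rewrite /F2 !mxtrace_mul_tenspow maxrXn ?psd_mxtrace_mul_ge0 // expr_div_n.
Qed.

End F2Tensor.

Theorem theorem4 :
  (forall (C : numClosedFieldType) (n1 n2 : nat)
          (rho1 sigma1 : 'M[C]_n1) (rho2 sigma2 : 'M[C]_n2),
      density rho1 -> density sigma1 -> density rho2 -> density sigma2 ->
      F2 rho1 sigma1 * F2 rho2 sigma2 <= F2 (rho1 *t rho2) (sigma1 *t sigma2))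
  /\
  (forall (C : numClosedFieldType) (n1 n2 : nat)
          (rho sigma : 'M[C]_n1) (tau : 'M[C]_n2),
      density rho -> density sigma -> density tau ->
      F2 (rho *t tau) (sigma *t tau) = F2 rho sigma)
  /\
  (forall (C : numClosedFieldType) (n : nat) (rho sigma : 'M[C]_n) (k : nat),
      density rho -> density sigma -> (1 <= k)%N ->
      F2 (tenspow rho k) (tenspow sigma k) = F2 rho sigma ^+ k).
Proof.
split; [|split].
- move=> C n1 n2 rho1 sigma1 rho2 sigma2 dr1 ds1 dr2 ds2.
  exact: (F2_tens_ge dr1.1 ds1.1 dr2.1 ds2.1
            (density_neq0 dr1) (density_neq0 ds1)
            (density_neq0 dr2) (density_neq0 ds2)).
- move=> C n1 n2 rho sigma tau _ _ dt.
  exact: (F2_tensr _ _ dt.1 (density_neq0 dt)).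
- move=> C n rho sigma k dr ds _.
  exact: F2_tenspow dr.1 ds.1.
Qed.
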